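(* Let $N\ge1$, $f:\mathbb{N}^N\to\mathbb{N}$, $k\ge0$ and $\boldsymbol{\ell}=(\ell_1,\dots,\ell_N)\in\mathbb{N}^N$. For $i=1,\dots,N$ let $d_i=\gcd(k,\ell_i)$ and $t_i=k/d_i$. Then $\binom{k}{\boldsymbol{\ell}}_f\equiv0\pmod{t_i}$ for all $i=1,\dots,N$; equivalently, $\binom{k}{\boldsymbol{\ell}}_f\equiv 0\pmod M$, where $M=\operatorname{lcm}(t_1,\dots,t_N)$ (i.e. $M=p_1^{m_1}\cdots p_R^{m_R}$ where $t_i=p_1^{(a_i)_1}\cdots p_R^{(a_i)_R}$ and $m_j=\max_i (a_i)_j$).
   Context: $\mathbb{N}=\{0,1,2,\dots\}$. For $k\ge0$ and $\mathbf{x}\in\mathbb{N}^N$, $\binom{k}{\mathbf{x}}_f=\sum_{\mathbf{m}_1+\cdots+\mathbf{m}_k=\mathbf{x}} f(\mathbf{m}_1)\cdots f(\mathbf{m}_k)$ over tuples of vectors in $\mathbb{N}^N$. *)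

From mathcomp Require Import all_boot.
Set Implicit Arguments. Unset Strict Implicit. Unset Printing Implicit Defensive.

Definition vecN (N : nat) := {ffun 'I_N -> nat}.

(* Generalized multinomial coefficient
   binom_f f k x = \sum_{m_1+...+m_k = x} f(m_1) ... f(m_k),
   the sum running over all k-tuples (m_1,...,m_k) of vectors of N^N.
   Every such tuple has entries m_i(j) <= x(j) < (\sum_j x j).+1, so summing
   over tuples with entries in 'I_((\sum_j x j).+1) enumerates all of them. *)
Definition binom_f (N : nat) (f : vecN N -> nat) (k : nat) (x : vecN N) : nat :=
  \sum_(t : {ffun 'I_k -> {ffun 'I_N -> 'I_((\sum_(j < N) x j).+1)}}
         | [forall j : 'I_N, \sum_(i < k) (t i j : nat) == x j])
     \prod_(i < k) f [ffun j => (t i j : nat)].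

From mathcomp Require Import all_boot perm.

(* Double counting: l_j * binom_f f k l = \sum_(i < k) \sum_t t_i(j) * weight t, where t
   runs over the k-tuples summing to l.  Permuting the entries of the tuples shows that
   the inner sum does not depend on i, so k divides l_j * binom_f f k l.  As k also
   divides k * binom_f f k l, it divides gcd(k, l_j) * binom_f f k l. *)

Section BinomF.

Variables (N : nat) (f : vecN N -> nat) (k : nat) (l : vecN N).

Local Notation tuple := {ffun 'I_k -> {ffun 'I_N -> 'I_((\sum_(j < N) l j).+1)}}.

Let sums_to_l (t : tuple) := [forall j, \sum_(i < k) (t i j : nat) == l j].

Let weight (t : tuple) := \prod_(i < k) f [ffun j => (t i j : nat)].

Let permute (s : {perm 'I_k}) (t : tuple) : tuple := [ffun a => t (s a)].

Lemma sums_to_l_permute s t : sums_to_l (permute s t) = sums_to_l t.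
Proof.
apply: eq_forallb => j; rewrite (reindex_inj (@perm_inj _ s^-1)) /=.
by under eq_bigr do rewrite ffunE permKV.
Qed.

Lemma weight_permute s t : weight (permute s t) = weight t.
Proof.
rewrite /weight (reindex_inj (@perm_inj _ s^-1)) /=.
by apply: eq_bigr => a _; congr f; apply/ffunP => j; rewrite !ffunE permKV.
Qed.

Lemma coord_moment_indep (i i' : 'I_k) (j : 'I_N) :
  \sum_(t | sums_to_l t) (t i j : nat) * weight t =
  \sum_(t | sums_to_l t) (t i' j : nat) * weight t.
Proof.
have permuteK : involutive (permute (tperm i i')).
  by move=> t; apply/ffunP => a; rewrite !ffunE tpermK.
rewrite (reindex_inj (inv_inj permuteK)) /=.
apply: eq_big => [t | t _]; first exact: sums_to_l_permute.
by rewrite weight_permute ffunE tpermL.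
Qed.

Lemma coord_mul_binom_f (j : 'I_N) :
  l j * binom_f f k l = \sum_(i < k) \sum_(t | sums_to_l t) (t i j : nat) * weight t.
Proof.
rewrite big_distrr exchange_big /=; apply: eq_bigr => t /forallP/(_ j)/eqP sum_t_j.
by rewrite -big_distrl sum_t_j.
Qed.

Lemma dvdn_coord_mul_binom_f (j : 'I_N) : k %| l j * binom_f f k l.
Proof.
rewrite coord_mul_binom_f; case: (posnP k) => [k0 | k_gt0].
  by rewrite big1 // => i; move: (ltn_ord i); rewrite {2}k0.
rewrite (eq_bigr _ (fun i _ => coord_moment_indep i (Ordinal k_gt0) j)).
by rewrite sum_nat_const card_ord dvdn_mulr.
Qed.

End BinomF.

Lemma dvdn_div_gcd k l m : 0 < gcdn k l -> k %| l * m -> k %/ gcdn k l %| m.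
Proof.
move=> gcd_gt0 k_dvd_lm.
by rewrite dvdn_divLR ?dvdn_gcdl // mulnC muln_gcdl dvdn_gcd k_dvd_lm dvdn_mulr.
Qed.

Theorem theorem11 (N : nat) (hN : 0 < N) (f : vecN N -> nat) (k : nat)
    (l : vecN N) :
  (forall i : 'I_N, 0 < gcdn k (l i) ->
     k %/ gcdn k (l i) %| binom_f f k l) /\
  ((forall i : 'I_N, 0 < gcdn k (l i)) ->
     \big[lcmn/1]_(i < N) (k %/ gcdn k (l i)) %| binom_f f k l).
Proof.
have dvd_binom i : 0 < gcdn k (l i) -> k %/ gcdn k (l i) %| binom_f f k l.
  by move=> gcd_gt0; apply: dvdn_div_gcd gcd_gt0 _; apply: dvdn_coord_mul_binom_f.
by split=> // gcd_gt0; apply/dvdn_biglcmP => i _; apply: dvd_binom.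
Qed.
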